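(* Let $P,P'\subset\mathbb{R}^d$ be polytopes, each inscribed into a sphere centered at the origin, with the same normal fan $\mathcal{N}(P)=\mathcal{N}(P')$. If some point $v$ is a vertex of both $P$ and $P'$ with the same normal cone $N_vP=N_vP'$, then $P=P'$. That is, an inscribed polytope with inscribing sphere centered at the origin is completely determined by its normal fan and a single vertex.
   Context: For a polytope $P$ and $c\in\mathbb{R}^d$, $P^c$ is the face maximizing $\langle c,x\rangle$. The normal cone of a face $F$ is $N_FP=\{c: F\subseteq P^c\}$; the normal fan $\mathcal{N}(P)$ is the collection of all normal cones of faces of $P$. *)

From HB Require Import structures.
From mathcomp Require Import all_boot all_order all_algebra.
From mathcomp Require Import boolp classical_sets reals.
Set Implicit Arguments. Unset Strict Implicit. Unset Printing Implicit Defensive.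
Import Order.TTheory GRing.Theory Num.Theory.
Local Open Scope ring_scope.
Local Open Scope classical_set_scope.

Section Polytopes.
Variables (R : realType) (d : nat).
Notation pt := 'rV[R]_d.

Definition dotv (c x : pt) : R := \sum_(i < d) c 0 i * x 0 i.

Definition conv (V : seq pt) : set pt :=
  [set x | exists w : 'I_(size V) -> R,
     [/\ forall i, 0 <= w i, \sum_i w i = 1 & x = \sum_i w i *: V`_i]].

Definition is_polytope (P : set pt) : Prop := exists V : seq pt, P = conv V.

Definition face_max (P : set pt) (c : pt) : set pt :=
  [set x | P x /\ forall y, P y -> dotv c y <= dotv c x].

Definition is_face (P : set pt) (F : set pt) : Prop := exists c, F = face_max P c.

Definition normal_cone (P : set pt) (F : set pt) : set pt :=
  [set c | F `<=` face_max P c].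

Definition normal_fan (P : set pt) : set (set pt) :=
  [set N | exists F, is_face P F /\ N = normal_cone P F].

Definition is_vertex (P : set pt) (v : pt) : Prop :=
  exists c, face_max P c = [set v].

(* inscribed in a sphere centered at the origin: all vertices have the same
   (squared) Euclidean norm *)
Definition inscribed0 (P : set pt) : Prop :=
  exists r : R, forall v, is_vertex P v -> dotv v v = r.

End Polytopes.

(* Equal normal fans make the vertices of P and P' correspond (a vector
   exposing a vertex of one polytope exposes a vertex of the other), and make
   corresponding edges parallel.  Let c0 expose the common vertex v.  Every
   other vertex u of P has an edge [u, w] to a vertex w higher in direction c0,
   and by induction w is also the corresponding vertex of P'.  The vertex u' of
   P' corresponding to u then lies on the line through w parallel to [u, w]
   and, like u, on the sphere through w centered at the origin; that line
   meets the sphere only in w and one other point, so u' = u.  Thus every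
   vertex of P lies in P', whence P is contained in P' by separation, and P'
   in P by symmetry. *)

From mathcomp Require Import all_boot all_order all_algebra.
From mathcomp Require Import boolp classical_sets reals.
From mathcomp Require Import ring lra.
Set Implicit Arguments. Unset Strict Implicit. Unset Printing Implicit Defensive.
Import Order.TTheory GRing.Theory Num.Theory.
Local Open Scope ring_scope.
Local Open Scope classical_set_scope.

Section DotProduct.
Variables (R : realType) (m : nat).
Implicit Types (c e h w x y z : 'rV[R]_m).

Lemma dotvC c x : dotv c x = dotv x c.
Proof. by apply: eq_bigr => i _; rewrite mulrC. Qed.

Lemma dotvDr c x y : dotv c (x + y) = dotv c x + dotv c y.
Proof. by rewrite /dotv -big_split; apply: eq_bigr => i _; rewrite mxE mulrDr. Qed.

Lemma dotvZr c (k : R) x : dotv c (k *: x) = k * dotv c x.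
Proof. by rewrite /dotv mulr_sumr; apply: eq_bigr => i _; rewrite mxE mulrCA. Qed.

Lemma dotvDl c x y : dotv (x + y) c = dotv x c + dotv y c.
Proof. by rewrite dotvC dotvDr !(dotvC c). Qed.

Lemma dotvZl c (k : R) x : dotv (k *: x) c = k * dotv x c.
Proof. by rewrite dotvC dotvZr dotvC. Qed.

Lemma dotvNr c x : dotv c (- x) = - dotv c x.
Proof. by rewrite -scaleN1r dotvZr mulN1r. Qed.

Lemma dotvBr c x y : dotv c (x - y) = dotv c x - dotv c y.
Proof. by rewrite dotvDr dotvNr. Qed.

Lemma dotvBl c x y : dotv (x - y) c = dotv x c - dotv y c.
Proof. by rewrite !(dotvC _ c) dotvBr. Qed.

Lemma dotv0r c : dotv c 0 = 0.
Proof. by rewrite -(subrr c) dotvBr subrr. Qed.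

Lemma dotv0l c : dotv 0 c = 0.
Proof. by rewrite dotvC dotv0r. Qed.

Lemma dotv_sumZr c n (w : 'I_n -> R) (F : 'I_n -> 'rV[R]_m) :
  dotv c (\sum_i w i *: F i) = \sum_i w i * dotv c (F i).
Proof.
elim/big_rec2: _ => [|i y1 y2 _ <-]; first exact: dotv0r.
by rewrite dotvDr dotvZr.
Qed.

Lemma dotvv_ge0 x : 0 <= dotv x x.
Proof. by apply: sumr_ge0 => i _; rewrite -expr2 sqr_ge0. Qed.

Lemma dotvv_eq0 x : (dotv x x == 0) = (x == 0).
Proof.
apply/eqP/eqP => [x0|->]; last exact: dotv0r.
apply/rowP => i; rewrite mxE; apply/eqP; rewrite -[_ == 0]orbb -mulf_eq0; apply/eqP.
by apply: (psumr_eq0P _ x0) => // j _; rewrite -expr2 sqr_ge0.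
Qed.

Lemma dotvv_gt0 x : (0 < dotv x x) = (x != 0).
Proof. by rewrite lt_def dotvv_eq0 dotvv_ge0 andbT. Qed.

Lemma dotvvB x y : dotv (x - y) (x - y) = dotv x x - 2 * dotv x y + dotv y y.
Proof. by rewrite !dotvBl !dotvBr (dotvC y x); ring. Qed.

Lemma dotv_le_dotvv x y : dotv y y <= dotv x x -> dotv x y <= dotv x x.
Proof. by move=> yx; have := dotvv_ge0 (x - y); rewrite dotvvB; lra. Qed.

Lemma dotv_eq_dotvv x y : dotv y y <= dotv x x -> dotv x x <= dotv x y -> y = x.
Proof.
move=> yx xy; apply/esym/eqP; rewrite -subr_eq0 -dotvv_eq0 eq_le dotvv_ge0 andbT.
by rewrite dotvvB; lra.
Qed.

Lemma orthogonal_colinear e z : e != 0 ->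
  (forall h, dotv h e = 0 -> dotv h z = 0) -> z = (dotv z e / dotv e e) *: e.
Proof.
rewrite -dotvv_gt0 => e0 ortho; set k := _ / _.
have ze : dotv (z - k *: e) e = 0 by rewrite dotvBl dotvZl divfK ?subrr ?gt_eqF.
apply/eqP; rewrite -subr_eq0 -dotvv_eq0; apply/eqP.
by rewrite dotvBr dotvZr ze mulr0 subr0 ortho.
Qed.

Lemma sphere_line_eq w e (s t : R) : s != 0 -> t != 0 ->
  dotv (w + s *: e) (w + s *: e) = dotv w w -> dotv (w + t *: e) (w + t *: e) = dotv w w ->
  w + s *: e = w + t *: e.
Proof.
have root r : r != 0 -> dotv (w + r *: e) (w + r *: e) = dotv w w ->
    r * dotv e e = - (2 * dotv w e).
  move=> r0; rewrite !dotvDl !dotvDr !dotvZl !dotvZr (dotvC e w).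
  have -> : dotv w w + r * dotv w e + (r * dotv w e + r * (r * dotv e e)) =
    dotv w w + r * (2 * dotv w e + r * dotv e e) by ring.
  rewrite -{2}[dotv w w]addr0 => /addrI /eqP; rewrite mulf_eq0 (negbTE r0) /=.
  by rewrite addr_eq0 => /eqP ->; rewrite opprK.
move=> s0 t0 /(root _ s0) es /(root _ t0); rewrite -es => /eqP.
have [->|e0] := eqVneq e 0; first by rewrite !scaler0.
by rewrite (inj_eq (mulIf _)) ?dotvv_eq0 // => /eqP ->.
Qed.

Lemma dotv_row_mx m1 m2 (c1 x1 : 'rV[R]_m1) (c2 x2 : 'rV[R]_m2) :
  dotv (row_mx c1 c2) (row_mx x1 x2) = dotv c1 x1 + dotv c2 x2.
Proof.
by rewrite /dotv big_split_ord; congr (_ + _); apply: eq_bigr => i _;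
  rewrite ?row_mxEl ?row_mxEr.
Qed.

End DotProduct.

Section Farkas.
Variables (R : realType) (m : nat).
Local Notation vec := 'rV[R]_m.

Definition in_cone n (a : 'I_n -> vec) (b : vec) : Prop :=
  exists2 l : 'I_n -> R, forall i, 0 <= l i & b = \sum_i l i *: a i.

Lemma in_cone_recl n (a : 'I_n.+1 -> vec) b k : 0 <= k ->
  in_cone (fun i => a (lift ord0 i)) (b - k *: a ord0) -> in_cone a b.
Proof.
move=> k0 [l l0 E]; exists (fun i => if unlift ord0 i is Some j then l j else k).
  by move=> i; case: unliftP.
rewrite big_ord_recl unlift_none; under eq_bigr do rewrite liftK.
by rewrite -E addrC subrK.
Qed.

(* Fourier-Motzkin elimination of the generator [a ord0]. *)
Lemma in_cone_eliminate n (a : 'I_n.+1 -> vec) b c :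
  let beta := dotv c (a ord0) in let p i := dotv c (a (lift ord0 i)) in
  0 < beta -> (forall i, p i <= 0) -> 0 < dotv c b ->
  in_cone (fun i => beta *: a (lift ord0 i) - p i *: a ord0) (beta *: b - dotv c b *: a ord0) ->
  in_cone a b.
Proof.
move=> beta p beta0 p0 cb0 [l l0 E].
have lp0 : \sum_i l i * p i <= 0 by apply: sumr_le0 => i _; rewrite mulr_ge0_le0.
apply: (@in_cone_recl _ _ _ ((dotv c b - \sum_i l i * p i) / beta)).
  by apply: divr_ge0; rewrite ?subr_ge0 ?(le_trans lp0) ?ltW.
exists l => //; apply: (scalerI (lt0r_neq0 beta0)).
rewrite scalerBr scalerA mulrCA divff ?lt0r_neq0 // mulr1 scalerBl opprB addrCA E.
rewrite scaler_suml scaler_sumr -big_split; apply: eq_bigr => i _ /=.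
by rewrite scalerBr !scalerA addrC subrK mulrC.
Qed.

Theorem farkas n (a : 'I_n -> vec) b :
  ~ in_cone a b -> exists c, (forall i, dotv c (a i) <= 0) /\ 0 < dotv c b.
Proof.
elim: n a b => [|n IH] a b nab.
  exists b; split => [[] //|]; rewrite dotvv_gt0; apply: contra_notN nab => /eqP ->.
  by exists (fun=> 0) => //; rewrite big_ord0.
have [c [ca cb]] : exists c, (forall i, dotv c (a (lift ord0 i)) <= 0) /\ 0 < dotv c b.
  by apply: IH => ab; apply: nab; apply: (@in_cone_recl _ _ _ 0); rewrite ?scale0r ?subr0.
set beta := dotv c (a ord0); set p := fun i => dotv c (a (lift ord0 i)).
have [beta_le0|beta_gt0] := lerP beta 0.
  by exists c; split => // i; case: (unliftP ord0 i) => [j ->|->].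
have [c' [ca' cb']] := IH _ _ (fun H => nab (in_cone_eliminate beta_gt0 ca cb H)).
have elim_dotv x : dotv (c' - (dotv c' (a ord0) / beta) *: c) x =
    dotv c' (beta *: x - dotv c x *: a ord0) / beta.
  by rewrite dotvBl dotvZl dotvBr !dotvZr; field; rewrite lt0r_neq0.
exists (c' - (dotv c' (a ord0) / beta) *: c); split; last first.
  by rewrite elim_dotv divr_gt0.
move=> i; rewrite elim_dotv; case: (unliftP ord0 i) => [j ->|->].
  by apply: mulr_le0_ge0; [exact: ca' | rewrite invr_ge0 ltW].
by rewrite -/beta subrr dotv0r mul0r.
Qed.

End Farkas.

(* Lifting to height 1 in R^(d+1) turns convex combinations into conic ones. *)
Lemma conv_separation (R : realType) (d : nat) (V : seq 'rV[R]_d) x : ~ conv V x ->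
  exists c (m : R), (forall i : 'I_(size V), dotv c V`_i <= m) /\ m < dotv c x.
Proof.
move=> Vx; pose lift1 (y : 'rV[R]_d) := row_mx y (const_mx 1 : 'rV[R]_1).
have /farkas[c [cV cx]] : ~ in_cone (fun i : 'I_(size V) => lift1 V`_i) (lift1 x).
  move=> [l l0 E]; apply: Vx; exists l; split => //.
    have := congr1 (fun y : 'rV_(d + 1)%N => y 0 (rshift d ord0)) E.
    rewrite summxE /lift1 row_mxEr mxE => ->.
    by apply: eq_bigr => i _; rewrite mxE row_mxEr mxE mulr1.
  apply/rowP => j; have := congr1 (fun y : 'rV_(d + 1)%N => y 0 (lshift 1 j)) E.
  rewrite summxE /lift1 row_mxEl => ->; rewrite summxE.
  by apply: eq_bigr => i _; rewrite [LHS]mxE row_mxEl mxE.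
have dotv_lift1 y : dotv c (lift1 y) = dotv (lsubmx c) y + rsubmx c 0 0.
  by rewrite -{1}(hsubmxK c) dotv_row_mx [dotv (rsubmx c) _]/dotv big_ord1 !mxE mulr1.
exists (lsubmx c), (- rsubmx c 0 0); split => [i|].
  by have := cV i; rewrite dotv_lift1; lra.
by move: cx; rewrite dotv_lift1; lra.
Qed.

Section ConvexSums.
Variables (R : numDomainType) (I : finType) (w : I -> R).
Hypotheses (w_ge0 : forall i, 0 <= w i) (w_sum1 : \sum_i w i = 1).

Lemma convex_sum_le (f : I -> R) m :
  (forall i, w i != 0 -> f i <= m) -> \sum_i w i * f i <= m.
Proof.
move=> fm; rewrite -[m]mul1r -w_sum1 mulr_suml; apply: ler_sum => i _.
by have [->|/fm] := eqVneq (w i) 0; rewrite ?mul0r // => /ler_wpM2l->.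
Qed.

Lemma convex_sum_ge (f : I -> R) m :
  (forall i, w i != 0 -> m <= f i) -> m <= \sum_i w i * f i.
Proof.
move=> fm; rewrite -[m]mul1r -w_sum1 mulr_suml; apply: ler_sum => i _.
by have [->|/fm] := eqVneq (w i) 0; rewrite ?mul0r // => /ler_wpM2l->.
Qed.

Lemma convex_sum_eq_max (f : I -> R) m : (forall i, w i != 0 -> f i <= m) ->
  \sum_i w i * f i = m -> forall i, w i != 0 -> f i = m.
Proof.
move=> fm sum_m i wi.
have gap0 j : true -> 0 <= w j * (m - f j).
  by have [->|wj] := eqVneq (w j) 0; rewrite ?mul0r // mulr_ge0 ?subr_ge0 ?fm.
have : \sum_j w j * (m - f j) = 0.
  by under eq_bigr do rewrite mulrBr; rewrite sumrB -mulr_suml w_sum1 mul1r sum_m subrr.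
move/(psumr_eq0P gap0)/(_ i isT)/eqP; rewrite mulf_eq0 (negbTE wi) subr_eq0.
by move=> /eqP.
Qed.

Lemma convex_sumZ_const (V : lmodType R) (F : I -> V) x :
  (forall i, w i != 0 -> F i = x) -> \sum_i w i *: F i = x.
Proof.
move=> Fx; rewrite -[x]scale1r -w_sum1 scaler_suml; apply: eq_bigr => i _.
by have [->|/Fx->] := eqVneq (w i) 0; rewrite ?scale0r.
Qed.

End ConvexSums.

Section Argmax.
Variables (R : realFieldType) (I : finType).
Implicit Types (f g p : I -> R) (S : {set I}).

Definition argmaxs f S : {set I} := [set i in S | [forall j in S, f j <= f i]].

Lemma argmaxsP f S i :
  reflect (i \in S /\ forall j, j \in S -> f j <= f i) (i \in argmaxs f S).
Proof. by rewrite inE; apply: (iffP andP) => -[iS /forall_inP]; split. Qed.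

Lemma argmaxs_sub f S : argmaxs f S \subset S.
Proof. by apply/fintype.subsetP => i /argmaxsP[]. Qed.

Lemma argmaxs_eq f S i j : i \in argmaxs f S -> j \in argmaxs f S -> f i = f j.
Proof. by move=> /argmaxsP[iS fi] /argmaxsP[jS fj]; apply/eqP; rewrite eq_le fi ?fj. Qed.

Lemma argmaxs_nonempty f S i : i \in S -> exists j, j \in argmaxs f S.
Proof.
move=> iS; case: (arg_maxP f iS) => j jS fj.
by exists j; apply/argmaxsP; split => // k /fj.
Qed.

Lemma exists_pos_lb p : (forall i, 0 < p i) -> exists2 e, 0 < e & forall i, e <= p i.
Proof.
move=> p_gt0; have inv_ge0 i : 0 <= (p i)^-1 by rewrite invr_ge0 ltW.
have sum_ge0 : 0 <= \sum_i (p i)^-1 by apply: sumr_ge0.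
exists (1 + \sum_i (p i)^-1)^-1; first by rewrite invr_gt0 ltr_wpDr.
move=> i; rewrite -[p i]invrK lef_pV2 ?posrE ?invr_gt0 ?ltr_wpDr //.
by rewrite (bigD1 i) //= addrCA lerDl addr_ge0 ?sumr_ge0.
Qed.

Lemma argmaxs_perturb f g S :
  exists2 e, 0 < e & argmaxs (fun i => f i + e * g i) S = argmaxs g (argmaxs f S).
Proof.
set A := argmaxs f S.
have [[i0 i0A]|A0] := pselect (exists i, i \in A); last first.
  exists 1 => //; apply/setP => i; apply/idP/idP => /argmaxsP[iS _]; last first.
    by case: A0; exists i.
  by case: A0; apply: argmaxs_nonempty iS.
pose spread j := 1 + \sum_k `|g j - g k|.
have spread_gt0 j : 0 < spread j by rewrite ltr_wpDr // sumr_ge0.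
pose p j := if j \in S :\: A then (f i0 - f j) / spread j else 1.
have [|e e0 ep] := @exists_pos_lb p.
  move=> j; rewrite /p; case: ifP => // /setDP[jS /argmaxsP jA].
  rewrite divr_gt0 // subr_gt0 ltNge; apply: contra_notN jA => fj; split => // k kS.
  by apply: le_trans fj; case/argmaxsP: i0A => _; apply.
exists e => //.
have jump i j : i \in A -> j \in S -> j \notin A -> f j + e * g j < f i + e * g i.
  move=> iA jS jA; rewrite (argmaxs_eq iA i0A).
  have gap : e * spread j <= f i0 - f j.
    by rewrite -ler_pdivlMr //; have := ep j; rewrite /p inE jA jS.
  have spread_ge : e * (g j - g i) <= e * \sum_k `|g j - g k|.
    by rewrite ler_pM2l // (bigD1 i) //= ler_wpDr ?sumr_ge0 ?ler_norm.
  by move: gap spread_ge; rewrite /spread mulrDr mulr1 mulrBr; lra.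
have AS := fintype.subsetP (argmaxs_sub f S).
apply/setP => i; apply/argmaxsP/argmaxsP => -[iS imax].
  have iA : i \in A by apply: contraT => iA; move: (imax _ (AS _ i0A)); rewrite leNgt jump.
  split=> // j jA; have := imax j (AS _ jA).
  by rewrite (argmaxs_eq iA jA) lerD2l ler_pM2l.
have iS' := AS _ iS; split => // j jS.
have [jA|jA] := boolP (j \in A); last exact/ltW/jump.
by rewrite (argmaxs_eq iS jA) lerD2l ler_pM2l // imax.
Qed.

End Argmax.

Section Faces.
Variables (R : realType) (d : nat).
Implicit Types (Q F : set 'rV[R]_d) (e g h u x y : 'rV[R]_d).

Lemma vertex_mem Q g u : face_max Q g = [set u] -> Q u.
Proof. by move=> E; have [] : face_max Q g u by rewrite E. Qed.

Lemma vertex_lt Q g u y : face_max Q g = [set u] -> Q y -> y != u -> dotv g y < dotv g u.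
Proof.
move=> E Qy; apply: contraNT; rewrite -leNgt => uy; apply/eqP.
have [Qu umax] : face_max Q g u by rewrite E.
suff : face_max Q g y by rewrite E.
by split=> // z /umax/le_trans; apply.
Qed.

Lemma face_max_set1 u h : face_max [set u] h = [set u].
Proof. by apply/seteqP; split=> [x []//|x ->]; split=> // y ->. Qed.

Lemma face_max_const F h :
  (forall x y, F x -> F y -> dotv h x = dotv h y) -> face_max F h = F.
Proof. by move=> hF; apply/seteqP; split=> [x []//|x Fx]; split=> // y Fy; rewrite (hF y x). Qed.

Lemma face_max_dotv_eq F h x y :
  face_max F h x -> face_max F h y -> dotv h x = dotv h y.
Proof. by move=> [Fx xmax] [Fy ymax]; apply/eqP; rewrite eq_le xmax ?ymax. Qed.

Lemma face_max_line_uniq F u e h x y :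
  (forall z, F z -> exists t : R, z = u + t *: e) -> dotv h e != 0 ->
  face_max F h x -> face_max F h y -> x = y.
Proof.
move=> line he Fx Fy; have := face_max_dotv_eq Fx Fy.
have [[s xE] [t yE]] := (line x Fx.1, line y Fy.1).
by rewrite xE yE !dotvDr !dotvZr => /addrI/(mulIf he)->.
Qed.

End Faces.

Section ConvexHullFaces.
Variables (R : realType) (d : nat) (V : seq 'rV[R]_d).
Local Notation pt := 'rV[R]_d.
Local Notation n := (size V).
Implicit Types (S : {set 'I_n}) (a c e g u x y : pt).

(* Every face of [conv V] is the hull of a set of generators (face_maxE), so
   faces can be computed on index sets. *)
Definition conv_idx S : set pt :=
  [set x | exists w : 'I_n -> R, [/\ forall i, 0 <= w i, \sum_i w i = 1,
     forall i, w i != 0 -> i \in S & x = \sum_i w i *: V`_i]].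

Definition height c (i : 'I_n) : R := dotv c V`_i.

Lemma conv_idxT : conv V = conv_idx [set: 'I_n]%SET.
Proof.
apply/seteqP; split=> x [w [w0 w1]]; last by move=> _ ->; exists w.
by move=> ->; exists w; split=> // i; rewrite inE.
Qed.

Lemma conv_idx_nth S i : i \in S -> conv_idx S V`_i.
Proof.
move=> iS; exists (fun j => (j == i)%:R); split=> [j||j|].
- by rewrite ler0n.
- by rewrite (bigD1 i) //= eqxx big1 ?addr0 // => j /negbTE->.
- by rewrite pnatr_eq0 eqb0 negbK => /eqP->.
- rewrite (bigD1 i) //= eqxx scale1r big1 ?addr0 // => j /negbTE->.
  by rewrite scale0r.
Qed.

Lemma conv_nth (i : 'I_n) : conv V V`_i.
Proof. by rewrite conv_idxT; apply: conv_idx_nth; rewrite inE. Qed.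

Lemma conv_idx_nonempty S x : conv_idx S x -> exists i, i \in S.
Proof.
move=> [w [_ w1 wS _]]; apply: contrapT => S0; move: w1; rewrite big1 => [/eqP|i _].
  by rewrite eq_sym oner_eq0.
by apply: contraNeq (oner_neq0 R) => /wS iS; case: S0; exists i.
Qed.

Lemma conv_idx_le S c x m :
  conv_idx S x -> (forall i, i \in S -> height c i <= m) -> dotv c x <= m.
Proof.
by move=> [w [w0 w1 wS ->]] cm; rewrite dotv_sumZr; apply: convex_sum_le => // i /wS/cm.
Qed.

Lemma conv_idx_const S x :
  (exists i, i \in S) -> (forall i, i \in S -> V`_i = x) -> conv_idx S = [set x].
Proof.
move=> [i iS] Vx; apply/seteqP; split=> [_ [w [w0 w1 wS ->]]|_ ->].
  by apply: convex_sumZ_const => // j /wS/Vx.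
by rewrite -(Vx i iS); apply: conv_idx_nth.
Qed.

Lemma conv_idx_line S u e (t : 'I_n -> R) x :
  (forall i, i \in S -> V`_i = u + t i *: e) -> conv_idx S x ->
  exists s : R, x = u + s *: e.
Proof.
move=> Vt [w [w0 w1 wS ->]]; exists (\sum_i w i * t i).
transitivity (\sum_i w i *: (u + t i *: e)).
  by apply: eq_bigr => i _; have [->|/wS/Vt->] := eqVneq (w i) 0; rewrite ?scale0r.
rewrite (eq_bigr _ (fun i _ => scalerDr _ _ _)) big_split /=.
rewrite (convex_sumZ_const w1 (x := u)) // scaler_suml.
by congr (_ + _); apply: eq_bigr => i _; rewrite scalerA.
Qed.

Lemma face_max_conv_idx S c : face_max (conv_idx S) c = conv_idx (argmaxs (height c) S).
Proof.
apply/seteqP; split=> x.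
  move=> [[w [w0 w1 wS xE]] xmax]; exists w; split=> // i wi.
  have hmax j : j \in S -> height c j <= dotv c x by move/conv_idx_nth/xmax.
  have hx : height c i = dotv c x.
    apply: (convex_sum_eq_max w0 w1 (fun j wj => hmax j (wS j wj))) => //.
    by rewrite xE dotv_sumZr.
  by apply/argmaxsP; split=> [|j /hmax]; [exact: wS | rewrite hx].
move=> [w [w0 w1 wA ->]]; split; first by exists w; split=> // i /wA/argmaxsP[].
move=> _ [w' [w0' w1' w'S ->]]; rewrite !dotv_sumZr.
apply: (convex_sum_ge w0 w1) => i /wA/argmaxsP[_ imax].
by apply: (convex_sum_le w0' w1') => j /w'S/imax.
Qed.

Definition face_idx c := argmaxs (height c) [set: 'I_n]%SET.

Lemma face_maxE c : face_max (conv V) c = conv_idx (face_idx c).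
Proof. by rewrite conv_idxT face_max_conv_idx. Qed.

Lemma face_idx_perturb c a :
  exists2 e, 0 < e & face_idx (c + e *: a) = argmaxs (height a) (face_idx c).
Proof.
have [e e0 E] := argmaxs_perturb (height c) (height a) [set: 'I_n]%SET.
exists e => //; rewrite -E /face_idx; congr argmaxs; apply/funext => i.
by rewrite /height dotvDl dotvZl.
Qed.

Lemma face_max_perturb c a :
  exists2 e, 0 < e & face_max (conv V) (c + e *: a) = face_max (face_max (conv V) c) a.
Proof.
have [e e0 E] := face_idx_perturb c a.
by exists e => //; rewrite !face_maxE E face_max_conv_idx.
Qed.

Lemma face_max_nonempty c y : conv V y -> exists x, face_max (conv V) c x.
Proof.
rewrite {1}conv_idxT => /conv_idx_nonempty[i iT].
have [j jA] := argmaxs_nonempty (height c) iT.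
by exists V`_j; rewrite face_maxE; apply: conv_idx_nth.
Qed.

Lemma vertex_nth g u : face_max (conv V) g = [set u] -> exists i : 'I_n, V`_i = u.
Proof.
move=> E; have : face_max (conv V) g u by rewrite E.
rewrite face_maxE => /conv_idx_nonempty[i iA].
by exists i; have := conv_idx_nth iA; rewrite -face_maxE E.
Qed.

(* A generator of maximal norm in a face is a vertex: it alone maximizes
   [dotv V`_k] on the face. *)
Lemma face_max_vertex c y : conv V y ->
  exists2 u, face_max (conv V) c u & exists g, face_max (conv V) g = [set u].
Proof.
move=> Vy; have [i0 i0A] : exists i, i \in face_idx c.
  by have [x] := face_max_nonempty c Vy; rewrite face_maxE => /conv_idx_nonempty.
have [k /argmaxsP[kA kmax]] := argmaxs_nonempty (fun i : 'I_n => dotv V`_i V`_i) i0A.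
exists V`_k; first by rewrite face_maxE; apply: conv_idx_nth.
have [e e0 E] := face_idx_perturb c V`_k.
exists (c + e *: V`_k); rewrite face_maxE E; apply: conv_idx_const.
  by exists k; apply/argmaxsP; split=> // j /kmax/dotv_le_dotvv.
by move=> i /argmaxsP[iA imax]; apply: dotv_eq_dotvv (kmax i iA) (imax k kA).
Qed.

End ConvexHullFaces.

Lemma conv_sub_of_vertices (R : realType) (d : nat) (V V' : seq 'rV[R]_d) :
  (forall g u, face_max (conv V) g = [set u] -> conv V' u) -> conv V `<=` conv V'.
Proof.
move=> vert x Vx; apply: contrapT => /conv_separation[c [m [cV' cx]]].
have [u ux [g /vert]] := face_max_vertex c Vx; rewrite conv_idxT => V'u.
have : dotv c u <= m by apply: (conv_idx_le V'u) => i _; apply: cV'.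
by have := ux.2 x Vx; lra.
Qed.

Section NormalFan.
Variables (R : realType) (d : nat).
Implicit Types (a b : 'rV[R]_d).

Lemma normal_cone_face_max_sub (P P' : set 'rV[R]_d) a : normal_fan P = normal_fan P' ->
  normal_cone P' (face_max P' a) `<=` normal_cone P (face_max P a).
Proof.
move=> fan b ab; have : normal_fan P' (normal_cone P (face_max P a)).
  by rewrite -fan; exists (face_max P a); split=> //; exists a.
move=> [_ [[a' ->] E]]; rewrite E /=.
have : normal_cone P (face_max P a) a by [].
by rewrite E => /subset_trans; apply.
Qed.

Lemma normal_cone_face_max (P P' : set 'rV[R]_d) a : normal_fan P = normal_fan P' ->
  normal_cone P (face_max P a) = normal_cone P' (face_max P' a).
Proof. by move=> fan; apply/seteqP; split; apply: normal_cone_face_max_sub. Qed.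

Lemma face_max_sub_transfer (P P' : set 'rV[R]_d) a b : normal_fan P = normal_fan P' ->
  face_max P a `<=` face_max P b -> face_max P' a `<=` face_max P' b.
Proof.
by move=> /(normal_cone_face_max a) E ab; have : normal_cone P (face_max P a) b by []; rewrite E.
Qed.

Lemma face_max_eq_transfer (P P' : set 'rV[R]_d) a b : normal_fan P = normal_fan P' ->
  face_max P a = face_max P b -> face_max P' a = face_max P' b.
Proof. by move=> fan ab; apply/seteqP; split; apply: (face_max_sub_transfer fan); rewrite ab. Qed.

Lemma vertex_normal_transfer (V V' : seq 'rV[R]_d) g u y :
  normal_fan (conv V) = normal_fan (conv V') -> conv V' y ->
  face_max (conv V) g = [set u] -> exists u', face_max (conv V') g = [set u'].
Proof.
move=> fan V'y Eg; have [y1 Fy1] := face_max_nonempty g V'y.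
exists y1; apply/seteqP; split=> [y2 Fy2|_ ->] //=.
have [e e0 Ee] := @face_max_perturb _ _ V' g (y1 - y2).
have sub : face_max (conv V) g `<=` face_max (conv V) (g + e *: (y1 - y2)).
  have [z Fz] := face_max_nonempty (g + e *: (y1 - y2)) (vertex_mem Eg).
  have : face_max (conv V) g z.
    by apply: (face_max_sub_transfer (esym fan) _ Fz); rewrite Ee => x [].
  by rewrite Eg => <- x ->.
have := face_max_sub_transfer fan sub Fy2; rewrite Ee => -[_ /(_ y1 Fy1)].
rewrite -subr_ge0 -dotvBr -oppr_le0 -dotvNr opprB => le0.
by apply/esym/eqP; rewrite -subr_eq0 -dotvv_eq0 eq_le le0 dotvv_ge0.
Qed.

End NormalFan.

Section Edge.
Variables (R : realType) (d : nat) (V : seq 'rV[R]_d) (c0 u g : 'rV[R]_d).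
Local Notation n := (size V).
Local Notation P := (conv V).
Hypothesis Eg : face_max P g = [set u].
Implicit Types (i : 'I_n) (S : {set 'I_n}).

Lemma vertex_normal_perturb h : exists2 e, 0 < e & face_max P (g + e *: h) = [set u].
Proof. by have [e e0 E] := face_max_perturb V g h; exists e; rewrite // E Eg face_max_set1. Qed.

Lemma vertex_normals_orthogonal z :
  (forall g', face_max P g' = [set u] -> dotv g' z = 0) -> z = 0.
Proof.
move=> ortho; apply/eqP; rewrite -dotvv_eq0; have [e e0 E] := vertex_normal_perturb z.
by move: (ortho _ E); rewrite dotvDl dotvZl ortho // add0r => /eqP; rewrite mulf_eq0 gt_eqF.
Qed.

Lemma vertex_gap g' i : face_max P g' = [set u] -> V`_i != u -> 0 < dotv g' (u - V`_i).
Proof.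
by move=> Eg' iu; rewrite dotvBr subr_gt0; apply: vertex_lt Eg' _ iu; apply: conv_nth.
Qed.

(* Tilt g' towards c0 until it first supports a generator of S above u. *)
Lemma tilt_vertex_normal S g' (i2 : 'I_n) : face_max P g' = [set u] ->
  i2 \in S -> dotv c0 u < dotv c0 V`_i2 ->
  exists s k, let a := g' + s *: c0 in [/\ 0 < s, k \in S, dotv c0 u < dotv c0 V`_k,
    forall i, i \in S -> height a i <= dotv a u & height a k = dotv a u].
Proof.
move=> Eg' i2S ui2; pose r i := dotv g' (u - V`_i) / dotv c0 (V`_i - u).
have up_gt0 i : dotv c0 u < dotv c0 V`_i -> 0 < dotv c0 (V`_i - u).
  by rewrite dotvBr subr_gt0.
have up_neq i : dotv c0 u < dotv c0 V`_i -> V`_i != u.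
  by apply: contraTneq => ->; rewrite ltxx.
pose up := [pred i | (i \in S) && (dotv c0 u < dotv c0 V`_i)].
have up_i2 : up i2 by rewrite /= i2S.
case: (arg_minP r up_i2) => k /andP[kS uk] kmin; set s := r k.
have s_gt0 : 0 < s by rewrite divr_gt0 ?vertex_gap ?up_neq ?up_gt0.
have sk : s * dotv c0 (V`_k - u) = dotv g' (u - V`_k) by rewrite divfK ?gt_eqF ?up_gt0.
exists s, k; split=> // [i iS|]; rewrite /height !dotvDl !dotvZl; last first.
  by move: sk; rewrite !dotvBr; lra.
have [->//|iu] := eqVneq V`_i u.
have [ui|iu'] := ltrP (dotv c0 u) (dotv c0 V`_i).
  have /kmin : up i by rewrite /= iS ui.
  by rewrite -/s /r ler_pdivlMr ?up_gt0 // !dotvBr mulrBr; lra.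
have := vertex_gap Eg' iu; have := ler_wpM2l (ltW s_gt0) iu'.
by rewrite dotvBr; lra.
Qed.

Definition upward S := conv_idx S u /\ exists2 i, i \in S & dotv c0 u < dotv c0 V`_i.

(* A smallest face containing u and a generator above u is a segment: every
   normal of u, tilted towards c0, still supports all of it, and the normals
   of u form an open cone. *)
Section MinimalUpwardFace.
Variable c : 'rV[R]_d.
Hypothesis upward_c : upward (face_idx V c).
Hypothesis minimal_c :
  forall c', upward (face_idx V c') -> (#|face_idx V c| <= #|face_idx V c'|)%N.
Local Notation S := (face_idx V c).

Lemma minimal_upward_ratio g' : face_max P g' = [set u] ->
  exists2 s, 0 < s & forall i, i \in S -> dotv g' (u - V`_i) = s * dotv c0 (V`_i - u).
Proof.
move=> Eg'; have [i2 i2S ui2] := upward_c.2.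
have [s [k [s_gt0 kS uk amax ak]]] := tilt_vertex_normal Eg' i2S ui2.
set a := g' + s *: c0 in amax ak.
have [e e0 Ee] := face_idx_perturb V c a.
have S'S : argmaxs (height a) S = S.
  apply/eqP; rewrite eqEcard argmaxs_sub -Ee minimal_c // Ee; split.
    rewrite -face_max_conv_idx; split; first exact: upward_c.1.
    by move=> y /conv_idx_le; apply.
  by exists k => //; apply/argmaxsP; split=> // j /amax; rewrite ak.
exists s => // i iS; have := amax i iS; rewrite -S'S in iS.
case/argmaxsP: iS => _ /(_ k kS); rewrite ak /height /a !dotvDl !dotvZl !dotvBr.
by lra.
Qed.

Lemma minimal_upward_collinear i (i2 : 'I_n) : i \in S -> i2 \in S -> V`_i2 != u ->
  V`_i = u + (dotv c0 (V`_i - u) / dotv c0 (V`_i2 - u)) *: (V`_i2 - u).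
Proof.
move=> iS i2S i2u; set e := V`_i2 - u.
have e_up : 0 < dotv c0 e.
  have [s s_gt0 rat] := minimal_upward_ratio Eg.
  by have := vertex_gap Eg i2u; rewrite rat // pmulr_rgt0.
have : dotv c0 e *: (V`_i - u) - dotv c0 (V`_i - u) *: e = 0.
  apply: vertex_normals_orthogonal => g' Eg'; have [s _ rat] := minimal_upward_ratio Eg'.
  rewrite dotvBr !dotvZr -[V`_i - u]opprB -[e]opprB !dotvNr rat // rat // !dotvBr.
  by ring.
move/eqP; rewrite subr_eq0 => /eqP ez.
by rewrite mulrC -scalerA -ez scalerA mulVf ?gt_eqF // scale1r addrC subrK.
Qed.

End MinimalUpwardFace.

Lemma edge_from_vertex x : conv V x -> dotv c0 u < dotv c0 x ->
  exists c y, [/\ face_max P c u, face_max P c y, dotv c0 u < dotv c0 y &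
    forall z, face_max P c z -> exists t : R, z = u + t *: (y - u)].
Proof.
move=> Vx ux; have upward0 : upward (face_idx V 0).
  split; first by rewrite -face_maxE; split=> [|y _]; [exact: vertex_mem Eg | rewrite !dotv0l].
  have [i ui] : exists i, dotv c0 u < dotv c0 V`_i.
    apply: contrapT => none; move: ux; rewrite ltNge => /negP; apply.
    move: Vx; rewrite conv_idxT => /conv_idx_le; apply=> i _.
    by rewrite leNgt; apply/negP => ui; apply: none; exists i.
  by exists i => //; apply/argmaxsP; split=> [|j _]; rewrite ?inE // /height !dotv0l.
have exN : exists N, `[< exists c, upward (face_idx V c) /\ #|face_idx V c| = N >].
  by exists #|face_idx V 0|; apply/asboolP; exists 0.
case: (ex_minnP exN) => N /asboolP[c [upc cN]] Nmin.
have minc c' : upward (face_idx V c') -> (#|face_idx V c| <= #|face_idx V c'|)%N.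
  by move=> upc'; rewrite cN Nmin //; apply/asboolP; exists c'.
have [i2 i2S ui2] := upc.2.
exists c, V`_i2; rewrite !face_maxE; split=> //; first exact: upc.1.
  exact: conv_idx_nth.
move=> z; apply: conv_idx_line => i iS.
apply: (minimal_upward_collinear upc minc iS i2S).
by apply/eqP => i2u; move: ui2; rewrite i2u ltxx.
Qed.

End Edge.

Section VertexTransfer.
Variables (R : realType) (d : nat) (V V' : seq 'rV[R]_d).
Local Notation P := (conv V).
Local Notation P' := (conv V').
Hypotheses (fan : normal_fan P = normal_fan P') (inscP : inscribed0 P) (inscP' : inscribed0 P').
Implicit Types (c e g u v w x y : 'rV[R]_d).

Lemma face_parallel_transfer c u e x y : e != 0 ->
  (forall z, face_max P c z -> exists t : R, z = u + t *: e) ->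
  face_max P' c x -> face_max P' c y -> exists k : R, x - y = k *: e.
Proof.
move=> e0 line Fx Fy; exists (dotv (x - y) e / dotv e e).
apply: (orthogonal_colinear (z := x - y) e0) => h he.
have [del del0 Edel] := face_max_perturb V c h.
have : face_max P (c + del *: h) = face_max P c.
  rewrite Edel face_max_const // => z z' /line[t ->] /line[t' ->].
  by rewrite !dotvDr !dotvZr he !mulr0.
move/(face_max_eq_transfer fan) => E'; have cxy := face_max_dotv_eq Fx Fy.
rewrite -E' in Fx Fy; have := face_max_dotv_eq Fx Fy.
rewrite !dotvDl !dotvZl cxy => /addrI /eqP; rewrite -subr_eq0 -mulrBr mulf_eq0.
by rewrite gt_eqF //= dotvBr => /eqP.
Qed.

Lemma edge_vertex_transfer c e g u gw w :
  face_max P g = [set u] -> face_max P gw = [set w] -> face_max P' gw = [set w] ->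
  w != u -> face_max P c u -> face_max P c w ->
  (forall x, face_max P c x -> exists t : R, x = u + t *: e) ->
  face_max P' g = [set u].
Proof.
move=> Eg Egw E'gw wu Fu Fw line.
have [u' E'g] := vertex_normal_transfer fan (vertex_mem E'gw) Eg.
have face_c' z h :
    face_max P h = [set z] -> face_max P c z -> face_max P' h `<=` face_max P' c.
  by move=> Eh Fz; apply: (face_max_sub_transfer fan); rewrite Eh => _ ->.
have Fu' : face_max P' c u' by apply: (face_c' _ _ Eg Fu); rewrite E'g.
have Fw' : face_max P' c w by apply: (face_c' _ _ Egw Fw); rewrite E'gw.
have [tw wE] := line w Fw.
have e0 : e != 0 by apply: contra_neq wu; rewrite wE => ->; rewrite scaler0 addr0.
have [k wu'E] := face_parallel_transfer e0 line Fw' Fu'.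
have u'w : u' != w.
  apply: contra_neq wu => u'w.
  suff : [set u] = [set w] :> set _ by move=> /seteqP[/(_ u erefl)].
  by rewrite -Eg -Egw; apply: (face_max_eq_transfer (esym fan)); rewrite E'g E'gw u'w.
have uE : u = w + (- tw) *: e by rewrite wE scaleNr addrK.
have u'E : u' = w + (- k) *: e by rewrite scaleNr -wu'E opprB addrC subrK.
have [[r rP] [r' rP']] := (inscP, inscP').
have sph_u : dotv u u = dotv w w by rewrite !rP //; [exists gw | exists g].
have sph_u' : dotv u' u' = dotv w w by rewrite !rP' //; [exists gw | exists g].
rewrite E'g u'E -(@sphere_line_eq _ _ w e (- tw)) -?uE ?oppr_eq0 //.
- by apply: contra_neq wu; rewrite uE => ->; rewrite oppr0 scale0r addr0.
- by apply: contra_neq u'w; rewrite u'E => ->; rewrite oppr0 scale0r addr0.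
- by rewrite -u'E.
Qed.

Lemma vertex_normals_transfer c0 v : face_max P c0 = [set v] ->
  normal_cone P [set v] `<=` normal_cone P' [set v] ->
  forall g u, face_max P g = [set u] -> face_max P' g = [set u].
Proof.
move=> Ev ncv; have /ncv ncv0 : normal_cone P [set v] c0 by move=> _ ->; rewrite Ev.
have base g : face_max P g = [set v] -> face_max P' g = [set v].
  move=> Eg; have [v' E'g] := vertex_normal_transfer fan (ncv0 v erefl).1 Eg.
  have : face_max P' g v by apply: (ncv g) => [_ ->|//]; rewrite Eg.
  by rewrite E'g => ->.
pose above u := [set i : 'I_(size V) | dotv c0 u < dotv c0 V`_i]%SET.
suff ind N g u : (#|above u| < N)%N -> face_max P g = [set u] -> face_max P' g = [set u].
  by move=> g u; apply: ind.
elim: N g u => [//|N IH] g u aboveN Eg.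
have [uv|uv] := eqVneq u v; first by rewrite uv in Eg *; apply: base.
have [c [y [Fu Fy uy line]]] :=
  edge_from_vertex Eg (vertex_mem Ev) (vertex_lt Ev (vertex_mem Eg) uv).
have [ep ep0 Eep] := face_max_perturb V c c0.
have [w Fw] := face_max_nonempty (c + ep *: c0) (vertex_mem Eg).
have Ew : face_max P (c + ep *: c0) = [set w].
  apply/seteqP; split=> [x|_ ->] // Fx; move: Fx Fw; rewrite Eep.
  by apply: face_max_line_uniq line _; rewrite dotvBr subr_eq0 gt_eqF.
have [Fcw wmax] : face_max (face_max P c) c0 w by rewrite -Eep Ew.
have uw : dotv c0 u < dotv c0 w := lt_le_trans uy (wmax y Fy).
apply: (edge_vertex_transfer Eg Ew _ _ Fu Fcw line); last first.
  by apply/eqP => wu; move: uw; rewrite wu ltxx.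
apply: (IH _ _ _ Ew); rewrite -ltnS (leq_trans _ aboveN) // ltnS; apply/proper_card/properP.
split; first by apply/fintype.subsetP => i; rewrite !inE; apply: lt_trans.
by have [i Vi] := vertex_nth Ew; exists i; rewrite !inE Vi ?ltxx.
Qed.

End VertexTransfer.

Theorem lemma2p2 (R : realType) (d : nat) (P P' : set 'rV[R]_d) (v : 'rV[R]_d) :
  is_polytope P -> is_polytope P' ->
  inscribed0 P -> inscribed0 P' ->
  normal_fan P = normal_fan P' ->
  is_vertex P v -> is_vertex P' v ->
  normal_cone P [set v] = normal_cone P' [set v] ->
  P = P'.
Proof.
move=> [V ->] [V' ->] inscP inscP' fan [c0 Ev] [c0' Ev'] ncv.
have [ncv1 ncv2] : normal_cone (conv V) [set v] `<=` normal_cone (conv V') [set v] /\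
    normal_cone (conv V') [set v] `<=` normal_cone (conv V) [set v] by rewrite ncv; split.
apply/seteqP; split; apply: conv_sub_of_vertices => g u Eg.
  exact: vertex_mem (vertex_normals_transfer fan inscP inscP' Ev ncv1 Eg).
exact: vertex_mem (vertex_normals_transfer (esym fan) inscP' inscP Ev' ncv2 Eg).
Qed.
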